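(* Let $G$ be an upward planar single-source digraph with maximum in- and outdegree at most two. Then in every upward planar embedding of $G$ and for every face $f$, there are at most two edges that are bad with respect to $f$.
   Context: A planar drawing of a digraph is upward if every edge $(u,v)$ is drawn as a curve strictly increasing in $y$ from $u$ to $v$; an upward planar embedding is the equivalence class of upward planar drawings with the same left-to-right orderings of incoming edges and of outgoing edges around each vertex. A single-source digraph has exactly one vertex of indegree zero. If a vertex has two incoming (outgoing) edges, these are its left and right incoming (outgoing) edges according to the embedding. An edge $e=(u,v)$ is bad with respect to face $f$ if either $e$ is the left outgoing edge of $u$ and the left incoming edge of $v$ and $f$ is the face to the right of $e$, or $e$ is the right outgoing edge of $u$ and the right incoming edge of $v$ and $f$ is the face to the left of $e$. *)

From mathcomp Require Import all_boot all_order all_algebra.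
From mathcomp Require Import all_classical all_reals all_analysis.
Set Implicit Arguments. Unset Strict Implicit. Unset Printing Implicit Defensive.
Import Order.TTheory GRing.Theory Num.Theory.
Import numFieldNormedType.Exports.
Local Open Scope classical_set_scope.
Local Open Scope ring_scope.

(* Points of the plane are
   pairs (x, y) in R * R; "upward" means increasing in the second coordinate. *)

Section Upward.
Variables (R : realType) (V : finType) (g : rel V).

Definition indeg (v : V) : nat := #|[set u | g u v]|.
Definition outdeg (v : V) : nat := #|[set w | g v w]|.

(* A drawing: vertex positions and, for every edge (u,v), a curve
   parameterized on [0,1]. *)
Record drawing := Drawing {
  dpos : V -> R * R ;
  dcurve : V -> V -> R -> R * R }.

Definition unit_itv : set R := [set t | 0 <= t <= 1].
Definition open_unit_itv : set R := [set t | 0 < t < 1].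

Definition upward_planar_drawing (D : drawing) : Prop :=
  injective (dpos D) /\
  (forall u v, g u v ->
     {within unit_itv, continuous (dcurve D u v)} /\
     dcurve D u v 0 = dpos D u /\ dcurve D u v 1 = dpos D v /\
     (forall s t, unit_itv s -> unit_itv t -> s < t ->
        (dcurve D u v s).2 < (dcurve D u v t).2) /\
     (forall t w, open_unit_itv t -> dcurve D u v t <> dpos D w)) /\
  (forall u v u' v', g u v -> g u' v' -> (u, v) <> (u', v') ->
     forall s t, open_unit_itv s -> open_unit_itv t ->
       dcurve D u v s <> dcurve D u' v' t).

Definition drawing_points (D : drawing) : set (R * R) :=
  [set p | (exists w, p = dpos D w) \/
           (exists u v t, g u v /\ unit_itv t /\ p = dcurve D u v t)].

Definition is_face (D : drawing) (f : set (R * R)) : Prop :=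
  exists p, ~ drawing_points D p /\
            f = connected_component (~` drawing_points D) p.

Definition face_right_of (D : drawing) (u v : V) (f : set (R * R)) : Prop :=
  exists t, open_unit_itv t /\ exists2 eps : R, 0 < eps &
    forall d : R, 0 < d < eps ->
      f ((dcurve D u v t).1 + d, (dcurve D u v t).2).
Definition face_left_of (D : drawing) (u v : V) (f : set (R * R)) : Prop :=
  exists t, open_unit_itv t /\ exists2 eps : R, 0 < eps &
    forall d : R, 0 < d < eps ->
      f ((dcurve D u v t).1 - d, (dcurve D u v t).2).

Definition out_left_of (D : drawing) (u v1 v2 : V) : Prop :=
  exists2 delta : R, 0 < delta &
    forall s t, unit_itv s -> unit_itv t ->
      (dpos D u).2 < (dcurve D u v1 s).2 < (dpos D u).2 + delta ->
      (dcurve D u v1 s).2 = (dcurve D u v2 t).2 ->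
      (dcurve D u v1 s).1 < (dcurve D u v2 t).1.

Definition in_left_of (D : drawing) (v w1 w2 : V) : Prop :=
  exists2 delta : R, 0 < delta &
    forall s t, unit_itv s -> unit_itv t ->
      (dpos D v).2 - delta < (dcurve D w1 v s).2 < (dpos D v).2 ->
      (dcurve D w1 v s).2 = (dcurve D w2 v t).2 ->
      (dcurve D w1 v s).1 < (dcurve D w2 v t).1.

Definition left_outgoing (D : drawing) (u v : V) : Prop :=
  g u v /\ exists v', [/\ g u v', v' != v & out_left_of D u v v'].
Definition right_outgoing (D : drawing) (u v : V) : Prop :=
  g u v /\ exists v', [/\ g u v', v' != v & out_left_of D u v' v].
Definition left_incoming (D : drawing) (u v : V) : Prop :=
  g u v /\ exists u', [/\ g u' v, u' != u & in_left_of D v u u'].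
Definition right_incoming (D : drawing) (u v : V) : Prop :=
  g u v /\ exists u', [/\ g u' v, u' != u & in_left_of D v u' u].

Definition bad_edge (D : drawing) (f : set (R * R)) (e : V * V) : Prop :=
  g e.1 e.2 /\
  ((left_outgoing D e.1 e.2 /\ left_incoming D e.1 e.2 /\
    face_right_of D e.1 e.2 f) \/
   (right_outgoing D e.1 e.2 /\ right_incoming D e.1 e.2 /\
    face_left_of D e.1 e.2 f)).

Definition single_source : Prop := exists! s : V, indeg s = 0%N.

End Upward.

From mathcomp Require Import all_boot all_order all_algebra.
From mathcomp Require Import all_classical all_reals all_analysis.
From mathcomp Require Import lra ring.
Set Implicit Arguments. Unset Strict Implicit. Unset Printing Implicit Defensive.
Import Order.TTheory GRing.Theory Num.Theory.
Import numFieldNormedType.Exports.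
Local Open Scope classical_set_scope.
Local Open Scope ring_scope.

(* Let (u, v) be bad with respect to a face f, say the left incoming edge of v
   with f on its right; (u2, v) is then the other incoming edge of v.  Since
   the only source is s, both u and u2 are joined to s by downward paths, and
   the drawings of the paths s..u v and s..u2 v are y-graphs: each height
   between s and v is met exactly once, continuously.  They enclose an open
   region whose closure reaches the height of v only at v.  The points just to
   the right of (u, v) near v lie in this region, and f is a connected part of
   the complement of the drawing, so f lies in the region; moreover following
   the edge upwards shows that v is in the closure of f.  Hence v is the unique
   highest point of the closure of f.  So all bad edges of f end at the same
   vertex, whose in-degree is at most two. *)

Section PlaneTopology.
Variable R : realType.

Lemma fst_continuous {T U : topologicalType} : continuous (fun p : T * U => p.1).
Proof. by move=> [x y]; apply: cvg_fst. Qed.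

Lemma snd_continuous {T U : topologicalType} : continuous (fun p : T * U => p.2).
Proof. by move=> [x y]; apply: cvg_snd. Qed.

Lemma open_lt_fun (T : topologicalType) (f : T -> R) c :
  continuous f -> open [set z | f z < c].
Proof.
by move=> fc; apply: (@open_comp _ _ f [set x | x < c]); [move=> x _; exact: fc | exact: open_lt c].
Qed.

Lemma open_gt_fun (T : topologicalType) (f : T -> R) c :
  continuous f -> open [set z | c < f z].
Proof.
by move=> fc; apply: (@open_comp _ _ f [set x | c < x]); [move=> x _; exact: fc | exact: open_gt c].
Qed.

Lemma closed_le_fun (T : topologicalType) (f : T -> R) c :
  continuous f -> closed [set z | f z <= c].
Proof.
by move=> fc; apply: (@preimage_closed _ _ f [set x | x <= c]); [move=> x _; exact: fc | exact: closed_le c].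
Qed.

Lemma closed_ge_fun (T : topologicalType) (f : T -> R) c :
  continuous f -> closed [set z | c <= f z].
Proof.
by move=> fc; apply: (@preimage_closed _ _ f [set x | c <= x]); [move=> x _; exact: fc | exact: closed_ge c].
Qed.

Lemma compact_graph_continuous (K : set (R * R)) (F h : R -> R) y0 :
  compact K -> continuous h -> (forall y, K (F y, h y)) ->
  (forall z, K z -> z.2 = h y0 -> z.1 = F y0) -> {for y0, continuous F}.
Proof.
move=> cK hc KF Ku; apply/cvgrPdist_lt => e e0.
pose Kfar := K `&` [set z : R * R | e <= `|F y0 - z.1|].
have cKfar : compact Kfar.
  apply: compact_closedI => //; apply: closed_ge_fun => z.
  apply: (@continuous_comp _ _ _ (fun z : R * R => z.1) (fun x => `|F y0 - x|)).
    exact: fst_continuous.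
  apply: (@continuous_comp _ _ _ (fun x => F y0 - x) (fun x => `|x|)).
    by apply: continuousB; [exact: cst_continuous | exact: cvg_id].
  exact: norm_continuous.
have cY : closed ((fun z : R * R => z.2) @` Kfar).
  apply: compact_closed; first exact: Rhausdorff.
  by apply: continuous_compact cKfar; apply: continuous_subspaceT; exact: snd_continuous.
have notY : ~ ((fun z : R * R => z.2) @` Kfar) (h y0).
  move=> [z [Kz /=]]; rewrite leNgt => /negP far /(Ku z Kz) z1.
  by apply: far; rewrite z1 subrr normr0.
have : \forall y \near y0, ~ ((fun z : R * R => z.2) @` Kfar) (h y).
  have : nbhs (h y0) (~` ((fun z : R * R => z.2) @` Kfar)).
    by apply: open_nbhs_nbhs; split => //; exact: closed_openC.
  exact: hc.
apply: filterS => y nY; rewrite ltNge; apply/negP => ey.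
by apply: nY; exists (F y, h y).
Qed.

Lemma horizontal_gap (K L : set (R * R)) : compact K -> compact L ->
  (forall k, K k -> ~ L k) ->
  exists2 d0 : R, 0 < d0 & forall k z, K k -> L z -> k.2 = z.2 -> d0 <= `|z.1 - k.1|.
Proof.
move=> cK cL disj.
pose dy := fun kz : (R * R) * (R * R) => kz.1.2 - kz.2.2.
pose dx := fun kz : (R * R) * (R * R) => kz.1.1 - kz.2.1.
have proj_cont (i j : (R * R) -> R) : continuous i -> continuous j ->
    continuous (fun kz : (R * R) * (R * R) => i kz.1 - j kz.2).
  move=> ic jc kz; apply: continuousB.
    exact: (@continuous_comp _ _ _ (fun kz : (R * R) * (R * R) => kz.1) i
              _ (@fst_continuous _ _ _) (ic _)).
  exact: (@continuous_comp _ _ _ (fun kz : (R * R) * (R * R) => kz.2) j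
            _ (@snd_continuous _ _ _) (jc _)).
have dy_cont : continuous dy by apply: proj_cont; exact: snd_continuous.
have dx_cont : continuous dx by apply: proj_cont; exact: fst_continuous.
pose W := (K `*` L) `&` ([set kz | dy kz <= 0] `&` [set kz | 0 <= dy kz]).
have cW : compact W.
  apply: compact_closedI; first exact: compact_setX.
  by apply: closedI; [exact: closed_le_fun | exact: closed_ge_fun].
have cI : closed (dx @` W).
  apply: compact_closed; first exact: Rhausdorff.
  by apply: continuous_compact cW; apply: continuous_subspaceT.
have notI0 : ~ (dx @` W) 0.
  move=> [[k z] [[/= Kk Lz] [/= h1 h2]] /eqP]; rewrite /dx /= subr_eq0 => /eqP e1.
  have e2 : k.2 = z.2 by apply/eqP; rewrite -subr_eq0 eq_le h1 h2.
  by apply: (disj k Kk); rewrite [k]surjective_pairing e1 e2 -surjective_pairing.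
have /nbhs_ballP [d0 d0p hb] : nbhs (0 : R) (~` (dx @` W)).
  by apply: open_nbhs_nbhs; split => //; exact: closed_openC.
exists d0 => // k z Kk Lz e; rewrite leNgt; apply/negP => lt.
apply: (hb (k.1 - z.1)); first by rewrite /ball /= sub0r normrN distrC.
by exists (k, z) => //; split => //=; rewrite /dy e subrr lexx.
Qed.

End PlaneTopology.

Section YGraphs.
Variable R : realType.

Definition clamp (a b y : R) : R := Num.max a (Num.min b y).

Lemma clamp_id a b y : a <= y <= b -> clamp a b y = y.
Proof. by move=> /andP [ay yb]; rewrite /clamp (min_r yb) (max_r ay). Qed.

Lemma clamp_range a b y : a <= b -> a <= clamp a b y <= b.
Proof. by move=> ab; rewrite /clamp le_max lexx ge_max ab ge_min lexx. Qed.

Lemma clamp_continuous a b : continuous (clamp a b).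
Proof.
move=> y; apply: (@continuous_max R R^o); first exact: cst_continuous.
by apply: (@continuous_min R R^o); [exact: cst_continuous | exact: cvg_id].
Qed.

(* Upward paths of an upward drawing are y-graphs. *)
Definition ygraph (K : set (R * R)) (a b : R) : Prop :=
  [/\ compact K, a <= b, (forall z, K z -> a <= z.2 <= b),
      (forall y, a <= y <= b -> exists2 z, K z & z.2 = y) &
      (forall z z', K z -> K z' -> z.2 = z'.2 -> z = z')].

(* The abscissa of the point of [K] at height [y], extended constantly
   outside [a, b]. *)
Definition ygraph_x (K : set (R * R)) (a b y : R) : R :=
  (xget (0, 0) [set z | K z /\ z.2 = clamp a b y]).1.

Section OneYGraph.
Variables (K : set (R * R)) (a b : R).
Hypothesis HK : ygraph K a b.

Lemma ygraph_x_in y : K (ygraph_x K a b y, clamp a b y).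
Proof.
case: HK => _ ab _ ex _; have [z Kz zy] := ex _ (clamp_range y ab).
have := @xgetPex _ (0, 0) [set z | K z /\ z.2 = clamp a b y] (ex_intro _ z (conj Kz zy)).
by rewrite /ygraph_x; move: (xget _ _) => w [Kw <-]; rewrite -surjective_pairing.
Qed.

Lemma ygraph_x_eq z : K z -> ygraph_x K a b z.2 = z.1.
Proof.
move=> Kz; case: HK => _ _ rg _ un.
have := ygraph_x_in z.2; rewrite clamp_id ?rg // => Kx.
by rewrite -(un _ _ Kx Kz erefl).
Qed.

Lemma ygraph_x_continuous : continuous (ygraph_x K a b).
Proof.
case: HK => cK ab _ _ un y0.
apply: (@compact_graph_continuous R K (ygraph_x K a b) (clamp a b) y0 cK (@clamp_continuous a b) ygraph_x_in).
by move=> z Kz zy; rewrite (un _ _ Kz (ygraph_x_in y0) zy).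
Qed.

End OneYGraph.

Section Region.
Variables (K1 K2 : set (R * R)) (a b : R) (zb zt : R * R).
Hypotheses (H1 : ygraph K1 a b) (H2 : ygraph K2 a b).
Hypotheses (zb1 : K1 zb) (zb2 : K2 zb) (zba : zb.2 = a).
Hypotheses (zt1 : K1 zt) (zt2 : K2 zt) (ztb : zt.2 = b).

Local Notation A := (ygraph_x K1 a b).
Local Notation B := (ygraph_x K2 a b).

(* Negative exactly when p lies strictly between the two graphs. *)
Definition between (p : R * R) : R := (p.1 - A p.2) * (p.1 - B p.2).

Definition region : set (R * R) :=
  [set p | a < p.2] `&` [set p | p.2 < b] `&` [set p | between p < 0].
Definition closed_region : set (R * R) :=
  [set p | a <= p.2] `&` [set p | p.2 <= b] `&` [set p | between p <= 0].

Lemma between_continuous : continuous between.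
Proof.
have gap_cont K : ygraph K a b -> continuous (fun p : R * R => p.1 - ygraph_x K a b p.2).
  move=> HK p; apply: continuousB; first exact: fst_continuous.
  apply: (@continuous_comp _ _ _ (fun p : R * R => p.2) (ygraph_x K a b)).
    exact: snd_continuous.
  exact: ygraph_x_continuous.
move=> p; apply: (@continuousM _ _ (fun p : R * R => p.1 - A p.2)
                                   (fun p : R * R => p.1 - B p.2)); exact: gap_cont.
Qed.

Lemma region_open : open region.
Proof.
apply: openI; first apply: openI.
- by apply: open_gt_fun; exact: snd_continuous.
- by apply: open_lt_fun; exact: snd_continuous.
- by apply: open_lt_fun; exact: between_continuous.
Qed.

Lemma closure_region : closure region `<=` closed_region.
Proof.
have cC : closed closed_region.
  apply: closedI; first apply: closedI.
  - by apply: closed_ge_fun; exact: snd_continuous.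
  - by apply: closed_le_fun; exact: snd_continuous.
  - by apply: closed_le_fun; exact: between_continuous.
rewrite [X in _ `<=` X](closure_id _).1 //.
by apply: closureS => p [[h1 h2] h3]; split; [split|] => /=; apply: ltW.
Qed.

(* At the two extreme heights both graphs pass through the common point. *)
Lemma between_extreme p : p.2 = a \/ p.2 = b -> between p <= 0 -> between p = 0.
Proof.
have sq0 (x : R) : x * x <= 0 -> x * x = 0.
  by move=> h; apply/le_anti; rewrite h -expr2 sqr_ge0.
move=> [] e; rewrite /between e.
- have := ygraph_x_eq H1 zb1; have := ygraph_x_eq H2 zb2; rewrite zba => -> ->.
  exact: sq0.
- have := ygraph_x_eq H1 zt1; have := ygraph_x_eq H2 zt2; rewrite ztb => -> ->.
  exact: sq0.
Qed.

Lemma closed_region_boundary p : closed_region p -> ~ region p -> K1 p \/ K2 p.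
Proof.
move=> [[/= pa pb] pbt] nR.
have psi0 : between p = 0.
  case: (ltP a p.2) => [ap|]; last by move=> pa'; apply: between_extreme => //; left; apply/le_anti/andP.
  case: (ltP p.2 b) => [pb'|]; last by move=> pb'; apply: between_extreme => //; right; apply/le_anti/andP.
  by apply/le_anti; rewrite pbt leNgt; apply/negP => neg; apply: nR; split; [split|].
have cl : clamp a b p.2 = p.2 by rewrite clamp_id // pa pb.
move/eqP: psi0; rewrite mulf_eq0 => /orP []; rewrite subr_eq0 => /eqP e.
- by left; have := ygraph_x_in H1 p.2; rewrite cl -e -surjective_pairing.
- by right; have := ygraph_x_in H2 p.2; rewrite cl -e -surjective_pairing.
Qed.

Lemma closed_region_top p : closed_region p -> p.2 <= b /\ (p.2 = b -> p = zt).
Proof.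
move=> [[_ pb] pbt]; split => // e.
have /eqP := between_extreme (or_intror e) pbt.
have := ygraph_x_eq H1 zt1; have := ygraph_x_eq H2 zt2; rewrite ztb /between e => -> ->.
by rewrite mulf_eq0 orbb subr_eq0 => /eqP e1; rewrite [p]surjective_pairing [zt]surjective_pairing e1 e ztb.
Qed.

Lemma connected_in_region (F : set (R * R)) : connected F ->
  F `<=` ~` (K1 `|` K2) -> (F `&` region) !=set0 -> F `<=` region.
Proof.
move=> cF FK ne.
suff <- : F `&` region = F by move=> p [].
apply: cF => //; first by exists region => //; exact: region_open.
exists (closure region); first exact: closed_closure.
apply/seteqP; split => p [Fp Rp]; split => //; first exact: subset_closure.
case: (pselect (region p)) => // nR.
by case: (FK p Fp); exact: closed_region_boundary (closure_region Rp) nR.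
Qed.

End Region.
End YGraphs.

Section DrawingBasics.
Variables (R : realType) (V : finType) (g : rel V) (D : drawing R V).
Hypothesis HD : upward_planar_drawing g D.
Local Notation pos := (dpos D).
Local Notation c := (dcurve D).

Lemma pos_inj : injective pos. Proof. by case: HD. Qed.

Section Edge.
Variables u v : V.
Hypothesis euv : g u v.

Lemma edge_continuous : {within `[0, 1]%classic, continuous (c u v)}.
Proof. by rewrite set_itvcc; case: HD => _ [/(_ u v euv) [] ]. Qed.

Lemma edge_start : c u v 0 = pos u.
Proof. by case: HD => _ [/(_ u v euv) [_ []]]. Qed.

Lemma edge_end : c u v 1 = pos v.
Proof. by case: HD => _ [/(_ u v euv) [_ [_ []]]]. Qed.

Lemma edge_increasing s t : 0 <= s <= 1 -> 0 <= t <= 1 -> s < t ->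
  (c u v s).2 < (c u v t).2.
Proof. by case: HD => _ [/(_ u v euv) [_ [_ [_ []]]]] H _ _; apply: H. Qed.

Lemma edge_interior_avoids_vertices t w : 0 < t < 1 -> c u v t <> pos w.
Proof. by case: HD => _ [/(_ u v euv) [_ [_ [_ []]]]] _ H _; apply: H. Qed.

Lemma edge_upward : (pos u).2 < (pos v).2.
Proof. by rewrite -edge_start -edge_end; apply: edge_increasing; rewrite ?ler01 ?lexx. Qed.

Lemma edge_point_cases r : 0 <= r <= 1 ->
  [\/ c u v r = pos u, c u v r = pos v | 0 < r < 1].
Proof.
move=> /andP [r0 r1]; case: (ltP 0 r) => [rp|rn]; last first.
  by apply: Or31; rewrite (@le_anti _ _ r 0) ?rn ?r0 // edge_start.
case: (ltP r 1) => [r1'|rn]; last first.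
  by apply: Or32; rewrite (@le_anti _ _ r 1) ?rn ?r1 // edge_end.
by apply: Or33; apply/andP.
Qed.

Lemma edge_height_inj s t : 0 <= s <= 1 -> 0 <= t <= 1 ->
  (c u v s).2 = (c u v t).2 -> s = t.
Proof.
move=> hs ht e; case: (ltgtP s t) => // st.
- by have := edge_increasing hs ht st; rewrite e ltxx.
- by have := edge_increasing ht hs st; rewrite e ltxx.
Qed.

Lemma edge_height_range s : 0 <= s <= 1 -> (pos u).2 <= (c u v s).2 <= (pos v).2.
Proof.
move=> /andP [s0 s1]; rewrite -edge_start -edge_end.
have le s' t' : 0 <= s' <= 1 -> 0 <= t' <= 1 -> s' <= t' -> (c u v s').2 <= (c u v t').2.
  by move=> hs ht; rewrite le_eqVlt => /orP [/eqP -> //|st]; exact/ltW/edge_increasing.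
by rewrite !le ?s0 ?s1 ?lexx ?ler01.
Qed.

Lemma edge_height_onto y : (pos u).2 <= y <= (pos v).2 ->
  exists2 s, 0 <= s <= 1 & (c u v s).2 = y.
Proof.
move=> hy.
have hc : {within `[0, 1]%classic, continuous (fun s => (c u v s).2)}.
  apply: (@within_continuous_comp _ _ _ _ (c u v) (fun p : R * R => p.2)).
    by move=> x _; exact: snd_continuous.
  exact: edge_continuous.
have hm : Num.min (c u v 0).2 (c u v 1).2 <= y <= Num.max (c u v 0).2 (c u v 1).2.
  by rewrite edge_start edge_end min_l ?max_r ?(ltW edge_upward).
by have [s] := IVT ler01 hc hm; rewrite in_itv /= => s01 sy; exists s.
Qed.

End Edge.

Lemma edge_interiors_disjoint u v u' v' s t : g u v -> g u' v' -> (u, v) <> (u', v') ->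
  0 < s < 1 -> 0 < t < 1 -> c u v s <> c u' v' t.
Proof. by case: HD => _ [_ H] e1 e2 ne hs ht; apply: H. Qed.

End DrawingBasics.

Section DownPaths.
Variables (R : realType) (V : finType) (g : rel V) (D : drawing R V).
Hypothesis HD : upward_planar_drawing g D.
Local Notation pos := (dpos D).
Local Notation c := (dcurve D).

Definition edge_points (u v : V) : set (R * R) := c u v @` `[0, 1]%classic.

(* [down_path x [:: y1; y2; ...]] says that (y1, x), (y2, y1), ... are edges:
   the sequence is a directed path read downwards from x. *)
Fixpoint down_path (x : V) (p : seq V) : Prop :=
  if p is y :: p' then g y x /\ down_path y p' else True.

Fixpoint path_points (x : V) (p : seq V) : set (R * R) :=
  if p is y :: p' then edge_points y x `|` path_points y p' else [set pos x].

Lemma edge_points_compact u v : g u v -> compact (edge_points u v).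
Proof.
move=> e; apply: continuous_compact; last exact: segment_compact.
exact: (edge_continuous HD e).
Qed.

Lemma path_points_top x p : down_path x p -> path_points x p (pos x).
Proof.
case: p => [|y p] //= [e _]; left; exists 1; last exact: (edge_end HD e).
by rewrite /= in_itv /= ler01 lexx.
Qed.

Lemma path_points_bottom x p : down_path x p -> path_points x p (pos (last x p)).
Proof. by elim: p x => [|y p IH] x //= [_ dp]; right; exact: IH. Qed.

Lemma path_points_drawing x p : down_path x p -> path_points x p `<=` drawing_points g D.
Proof.
elim: p x => [|y p IH] x /=; first by move=> _ z ->; left; exists x.
move=> [e dp] z [[s s01 <-]|]; last exact: IH.
by right; exists y, x, s; rewrite /= in_itv /= in s01.
Qed.

Lemma path_points_height x p : down_path x p -> forall z, path_points x p z ->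
  (pos (last x p)).2 <= z.2 <= (pos x).2.
Proof.
elim: p x => [|y p IH] x /=; first by move=> _ z ->; rewrite lexx.
move=> [e dp] z [[s s01 <-]|Kz].
  have /andP [h1 _] := IH y dp _ (path_points_top dp).
  have /andP [h2 h3] := edge_height_range HD e s01.
  by rewrite h3 (le_trans h1 h2).
have /andP [h1 h2] := IH y dp _ Kz.
by rewrite h1 (le_trans h2) // ltW // (edge_upward HD e).
Qed.

(* Along a down path the height is a bijective coordinate, so the drawing
   of the path is a y-graph between its two ends. *)
Lemma path_ygraph x p : down_path x p ->
  ygraph (path_points x p) (pos (last x p)).2 (pos x).2.
Proof.
move=> dp; split.
- elim: p x dp => [|y p IH] x /=; first by move=> _; exact: compact_set1.
  by move=> [e dp]; apply: compactU; [exact: edge_points_compact | exact: IH].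
- by have /andP [] := path_points_height dp (path_points_top dp).
- exact: path_points_height.
- elim: p x dp => [|y0 p IH] x /=.
    by move=> _ y /andP [h1 h2]; exists (pos x) => //; apply/le_anti/andP.
  move=> [e dp] y /andP [h1 h2]; case: (leP (pos y0).2 y) => hy.
    have [s s01 sy] := edge_height_onto HD e (y := y) (ltac:(by rewrite hy h2)).
    by exists (c y0 x s) => //; left; exists s => //; rewrite /= in_itv.
  by have [z Kz zy] := IH y0 dp y (ltac:(by rewrite h1 ltW)); exists z => //; right.
- elim: p x dp => [|y p IH] x /=; first by move=> _ z z' -> ->.
  move=> [e dp].
  have edge_path z z' : edge_points y x z -> path_points y p z' -> z.2 = z'.2 -> z = z'.
    move=> [s s01 <-] Kz' hz; rewrite /= in_itv /= in s01.
    have /andP [_ h2] := path_points_height dp Kz'.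
    case: (edge_point_cases HD e s01) => [hu|hv|/andP [s0 _]].
    + by rewrite hu in hz *; exact: IH dp _ _ (path_points_top dp) Kz' hz.
    + by move: h2; rewrite -hz hv leNgt (edge_upward HD e).
    + have := edge_increasing HD e (s := 0) (t := s); rewrite lexx ler01 s0 /=.
      by move=> /(_ isT s01 isT); rewrite (edge_start HD e) hz ltNge h2.
  move=> z z' [Cz|Kz] [Cz'|Kz'] hz.
  + move: Cz Cz' hz => [s s01 <-] [s' s01' <-] hz.
    by rewrite /= !in_itv /= in s01 s01'; rewrite (edge_height_inj HD e s01 s01' hz).
  + exact: edge_path.
  + exact/esym/(edge_path _ _ Cz' Kz (esym hz)).
  + exact: (IH y dp _ _ Kz Kz' hz).
Qed.

Lemma path_point_cases x p : down_path x p -> forall z, path_points x p z ->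
  (exists w, z = pos w) \/
  exists a b r, [/\ g a b, 0 < r < 1, z = c a b r & (pos b).2 <= (pos x).2].
Proof.
elim: p x => [|y p IH] x /=; first by move=> _ z ->; left; exists x.
move=> [e dp] z [[s s01 <-]|Kz].
  rewrite /= in_itv /= in s01.
  case: (edge_point_cases HD e s01) => [->|->|s01']; try by left; eexists.
  by right; exists y, x, s; split.
case: (IH y dp z Kz) => [|[a [b [r [eab r01 zr hb]]]]]; first by left.
right; exists a, b, r; split => //.
by rewrite (le_trans hb) // ltW // (edge_upward HD e).
Qed.

Lemma path_point_on_first_edge x y p z : down_path x (y :: p) ->
  path_points x (y :: p) z -> (pos y).2 < z.2 -> exists2 r, 0 <= r <= 1 & z = c y x r.
Proof.
move=> [_ dp] [[r r01 <-]|Kz] hz; first by exists r; rewrite /= in_itv in r01.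
by have /andP [_ h] := path_points_height dp Kz; rewrite ltNge h in hz.
Qed.

Lemma path_avoids_edge_interior u v u2 p r : g u v -> down_path v (u2 :: p) ->
  u2 != u -> 0 < r < 1 -> ~ path_points v (u2 :: p) (c u v r).
Proof.
move=> e [e2 dp] nu r01 [[r' r'01 hr']|Kz].
  rewrite /= in_itv /= in r'01.
  case: (edge_point_cases HD e2 r'01) => [h|h|r'01'].
  - by apply: (edge_interior_avoids_vertices HD e r01 (w := u2)); rewrite -hr' h.
  - by apply: (edge_interior_avoids_vertices HD e r01 (w := v)); rewrite -hr' h.
  - apply: (edge_interiors_disjoint HD e2 e _ r'01' r01 hr').
    by move=> [h]; move: nu; rewrite h eqxx.
case: (path_point_cases dp Kz) => [[w hw]|[a [b [r'' [eab r''01 hz hb]]]]].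
  exact: (edge_interior_avoids_vertices HD e r01 hw).
apply: (edge_interiors_disjoint HD e eab _ r01 r''01 hz) => -[_ hbv].
by move: hb; rewrite -hbv leNgt (edge_upward HD e2).
Qed.

End DownPaths.

Lemma indeg2_in_neighbours (V : finType) (g : rel V) x (u1 u2 u3 : V) :
  (indeg g x <= 2)%N -> g u1 x -> g u2 x -> g u3 x ->
  u1 = u2 \/ u1 = u3 \/ u2 = u3.
Proof.
move=> hd h1 h2 h3.
case: (eqVneq u1 u2) => [|n12]; first by left.
case: (eqVneq u1 u3) => [|n13]; first by right; left.
case: (eqVneq u2 u3) => [|n23]; first by right; right.
exfalso; move: hd; apply/negP; rewrite -ltnNge /indeg cardE.
apply: (@uniq_leq_size _ [:: u1; u2; u3]); first by rewrite /= !inE negb_or n12 n13 n23.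
by move=> z; rewrite !inE mem_enum => /or3P [] /eqP ->; rewrite inE.
Qed.

(* In an upward drawing of a digraph whose only possible source is [s],
   every vertex is joined to [s] by a down path: follow incoming edges, which
   strictly decrease the number of vertices drawn lower. *)
Lemma down_path_to_source (R : realType) (V : finType) (g : rel V) (D : drawing R V)
  (s : V) : upward_planar_drawing g D -> (forall x, indeg g x = 0%N -> x = s) ->
  forall x, exists2 p, down_path g x p & last x p = s.
Proof.
move=> HD hs x.
pose below x := #|[pred w | (dpos D w).2 < (dpos D x).2]|.
elim: {x}(below x).+1 {-2}x (ltnSn (below x)) => // n IH x hn.
case: (eqVneq x s) => [->|xs]; first by exists [::].
have /card_gt0P [y] : (0 < indeg g x)%N by rewrite lt0n; apply/eqP => /hs; apply/eqP.
rewrite inE => e.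
have lt : (below y < below x)%N.
  apply: proper_card; apply/fintype.properP; split.
    by apply/fintype.subsetP => w; rewrite !inE /= => h; apply: lt_trans h (edge_upward HD e).
  by exists y; rewrite !inE /= ?ltxx // (edge_upward HD e).
have [p dp lp] := IH y (leq_trans lt (ltnSE hn)).
by exists (y :: p).
Qed.

Section FaceAlongEdge.
Variables (R : realType) (V : finType) (g : rel V) (D : drawing R V).
Hypothesis HD : upward_planar_drawing g D.
Local Notation pos := (dpos D).
Local Notation c := (dcurve D).
Local Notation Dr := (drawing_points g D).

Lemma bigsetU_mem (I : eqType) (F : I -> set (R * R)) (s : seq I) (P : pred I) z :
  (\big[setU/set0]_(i <- s | P i) F i) z <-> exists i, [/\ i \in s, P i & F i z].
Proof.
elim: s => [|i s IH]; first by rewrite big_nil; split => // -[i []].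
rewrite big_cons; case: ifP => Pi; split.
- move=> [Fz|/IH [j [js Pj Fj]]]; first by exists i; rewrite inE eqxx.
  by exists j; rewrite inE js orbT.
- move=> [j [+ Pj Fj]]; rewrite inE => /orP [/eqP ej|js]; first by left; rewrite -ej.
  by right; apply/IH; exists j.
- by move=> /IH [j [js Pj Fj]]; exists j; rewrite inE js orbT.
- move=> [j [+ Pj Fj]]; rewrite inE => /orP [/eqP ej|js]; first by rewrite ej Pi in Pj.
  by apply/IH; exists j.
Qed.

Definition drawing_rest (u v : V) : set (R * R) :=
  (\big[setU/set0]_(w <- enum V) [set pos w]) `|`
  (\big[setU/set0]_(e <- enum {: V * V} | g e.1 e.2 && (e != (u, v))) edge_points D e.1 e.2).

Lemma drawing_rest_compact u v : compact (drawing_rest u v).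
Proof.
apply: compactU; apply: bigsetU_compact => i; first by move=> _; exact: compact_set1.
by move=> /andP [e _]; exact: (edge_points_compact HD e).
Qed.

Lemma drawing_rest_vertex u v w : drawing_rest u v (pos w).
Proof. by left; apply/bigsetU_mem; exists w; split => //; rewrite mem_enum. Qed.

Lemma drawing_points_cases u v z : g u v -> Dr z ->
  drawing_rest u v z \/ exists2 r, 0 < r < 1 & z = c u v r.
Proof.
move=> e [[w ->]|[a [b [r [eab [r01 ->]]]]]]; first by left; exact: drawing_rest_vertex.
case: (eqVneq (a, b) (u, v)) => [[-> ->]|ne].
  case: (edge_point_cases HD e r01) => [->|->|r01']; last by right; exists r.
  - by left; exact: drawing_rest_vertex.
  - by left; exact: drawing_rest_vertex.
left; right; apply/bigsetU_mem; exists (a, b); split => /=.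
- by rewrite mem_enum.
- by rewrite eab ne.
- by exists r => //=; rewrite in_itv.
Qed.

Lemma drawing_rest_avoids_edge u v s : g u v -> 0 < s < 1 -> ~ drawing_rest u v (c u v s).
Proof.
move=> e s01 [/bigsetU_mem [w [_ _ /= hw]]|].
  exact: (edge_interior_avoids_vertices HD e s01 hw).
move=> /bigsetU_mem [[a b] [_ /andP [/= eab ne] [r r01 hr]]].
rewrite /= in_itv /= in r01.
case: (edge_point_cases HD eab r01) => [h|h|r01'].
- by apply: (edge_interior_avoids_vertices HD e s01 (w := a)); rewrite -hr h.
- by apply: (edge_interior_avoids_vertices HD e s01 (w := b)); rewrite -hr h.
- by apply: (edge_interiors_disjoint HD eab e _ r01' s01 hr) => h; rewrite h eqxx in ne.
Qed.

(* Points at horizontal offset [sg * d] (sg = 1: right, sg = -1: left) from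
   an edge. *)
Definition offset (sg d : R) (z : R * R) : R * R := (z.1 + sg * d, z.2).

Lemma offset_continuous sg d : continuous (offset sg d).
Proof.
move=> z; apply: (@cvg_pair _ _ _ (nbhs z) (nbhs (z.1 + sg * d)) (nbhs z.2)).
  apply: (@continuousD _ _ _ (fun z : R * R => z.1) (fun _ => sg * d)).
    exact: fst_continuous.
  exact: cst_continuous.
exact: snd_continuous.
Qed.

Lemma norm_sign (sg d : R) : (sg = 1 \/ sg = -1) -> `|sg * d| = `|d|.
Proof. by case=> ->; rewrite ?mul1r ?mulN1r ?normrN. Qed.

(* If the points just beside the edge (u, v) at parameter t lie in a face f,
   so do the points just beside it at any later parameter t1 < 1: sliding
   the offset segment along the edge stays off the drawing, because the rest
   of the drawing keeps a positive horizontal distance from the arc. *)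
Lemma face_along_edge (u v : V) (f : set (R * R)) p0 (sg t eps t1 : R) :
  g u v -> f = connected_component (~` Dr) p0 -> (sg = 1 \/ sg = -1) ->
  0 < t -> t <= t1 -> t1 < 1 -> 0 < eps ->
  (forall d, 0 < d < eps -> f (offset sg d (c u v t))) ->
  exists2 d0, 0 < d0 & forall d, 0 < d < d0 -> f (offset sg d (c u v t1)).
Proof.
move=> e hf hsg t0 tt1 t11 eps0 hq.
have in01 s : `[t, t1]%classic s -> 0 < s < 1.
  by rewrite /= in_itv /= => /andP [h1 h2]; rewrite (lt_le_trans t0 h1) (le_lt_trans h2 t11).
have sub01 : `[t, t1]%classic `<=` `[0, 1]%classic.
  by move=> s /in01 /andP [s0 s1]; rewrite /= in_itv /= !ltW.
have ccont : {within `[t, t1]%classic, continuous (c u v)}.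
  exact: (continuous_subspaceW sub01 (edge_continuous HD e)).
pose arc := c u v @` `[t, t1]%classic.
have [d0 d0p hd0] : exists2 d0 : R, 0 < d0 & forall k z, arc k ->
    drawing_rest u v z -> k.2 = z.2 -> d0 <= `|z.1 - k.1|.
  apply: horizontal_gap; last first.
  - by move=> k [s hs <-]; apply: drawing_rest_avoids_edge => //; exact: in01.
  - exact: drawing_rest_compact.
  - by apply: continuous_compact => //; exact: segment_compact.
exists (Num.min d0 eps); first by rewrite lt_min d0p eps0.
move=> d /andP [dp]; rewrite lt_min => /andP [dd0 deps].
pose P s := offset sg d (c u v s).
pose segment := P @` `[t, t1]%classic.
have segment_conn : connected segment.
  apply: connected_continuous_connected; first exact: segment_connected.
  apply: (@within_continuous_comp _ _ _ _ (c u v) (offset sg d)) => //.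
  by move=> x _; exact: offset_continuous.
have segment_off : segment `<=` ~` Dr.
  move=> z [s hs <-] /(drawing_points_cases e) [hO|[r r01 hr]].
    have := hd0 (c u v s) (P s) (ex_intro2 _ _ s hs erefl) hO erefl.
    by rewrite /P /= addrAC subrr add0r norm_sign // ger0_norm ?(ltW dp) // leNgt dd0.
  have /andP [s0 s1] := in01 s hs; have /andP [r0 r1] := r01.
  have rs : r = s by apply: (edge_height_inj HD e); rewrite ?ltW ?r0 ?s0 // -hr.
  move: hr; rewrite rs /P => /(congr1 fst) /= /eqP.
  rewrite -subr_eq0 addrAC subrr add0r mulf_eq0 (gt_eqF dp) orbF.
  by case: hsg => ->; rewrite ?oppr_eq0 oner_eq0.
have tI : `[t, t1]%classic t by rewrite /= in_itv /= lexx tt1.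
have t1I : `[t, t1]%classic t1 by rewrite /= in_itv /= lexx tt1.
have fPt : f (P t) by apply: hq; rewrite dp deps.
have : segment `<=` connected_component (~` Dr) (P t).
  by apply: connected_component_max => //; exists t.
rewrite -(same_connected_component (x := p0)) -?hf //.
by move=> /(_ (P t1)); apply; exists t1.
Qed.

Lemma head_in_face_closure (u v : V) (f : set (R * R)) p0 (sg t eps : R) :
  g u v -> f = connected_component (~` Dr) p0 -> (sg = 1 \/ sg = -1) ->
  0 < t < 1 -> 0 < eps -> (forall d, 0 < d < eps -> f (offset sg d (c u v t))) ->
  closure f (pos v).
Proof.
move=> e hf hsg /andP [t0 t1] eps0 hq B /nbhs_ballP [ep ep0 hB].
have h1 : `[0, 1]%classic (1 : R) by rewrite /= in_itv /= ler01 lexx.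
have hc := (@subspace_continuousP R (`[0, 1]%classic : set R) _ (c u v)).1
             (edge_continuous HD e) 1 h1.
rewrite (edge_end HD e) in hc.
have ep2 : 0 < ep / 2 by rewrite divr_gt0.
have /nbhs_ballP [dl dl0 hdl] := hc _ (nbhsx_ballx _ _ ep2).
pose m := Num.min dl (1 - t); pose r := 1 - m / 2.
have m0 : 0 < m by rewrite lt_min dl0 subr_gt0 t1.
have mt : m <= 1 - t by rewrite ge_min lexx orbT.
have md : m <= dl by rewrite ge_min lexx.
have tr : t <= r by rewrite /r; lra.
have r1 : r < 1 by rewrite /r; lra.
have near_v : ball (pos v) (ep / 2) (c u v r).
  apply: (hdl r); last by rewrite /= in_itv /=; apply/andP; split; lra.
  by rewrite /ball /= /r opprB addrC subrK ger0_norm; lra.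
have [d0 d0p hd0] := face_along_edge e hf hsg t0 tr r1 eps0 hq.
pose d := Num.min d0 (ep / 2) / 2.
have m1 : 0 < Num.min d0 (ep / 2) by rewrite lt_min d0p ep2.
have m2 : Num.min d0 (ep / 2) <= d0 by rewrite ge_min lexx.
have m3 : Num.min d0 (ep / 2) <= ep / 2 by rewrite ge_min lexx orbT.
have hd : `|d| = d by rewrite ger0_norm // /d; lra.
exists (offset sg d (c u v r)); split; first by apply: hd0; rewrite /d; apply/andP; split; lra.
apply: hB; move: near_v => [hx hy]; split; rewrite /ball /= in hx hy *; last by lra.
rewrite opprD addrA; apply: (le_lt_trans (ler_normB _ _)).
by rewrite norm_sign // hd /d; lra.
Qed.

End FaceAlongEdge.

Lemma positive_without_zero (R : realType) (G : R -> R) y0 y1 :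
  y0 <= y1 -> continuous G -> (forall y, y0 <= y <= y1 -> G y != 0) ->
  0 < G y1 -> 0 < G y0.
Proof.
move=> y01 Gc G_nz G1; rewrite ltNge; apply/negP => G0.
have hm : Num.min (G y0) (G y1) <= 0 <= Num.max (G y0) (G y1).
  by rewrite ge_min G0 /= le_max (ltW G1) orbT.
have [y] := IVT y01 (continuous_subspaceT Gc) hm.
by rewrite in_itv /= => /G_nz /eqP.
Qed.

Definition enters_on_side (R : realType) (V : finType) (D : drawing R V)
  (u u2 v : V) (sg : R) : Prop :=
  exists2 dl : R, 0 < dl & forall s1 t1, 0 <= s1 <= 1 -> 0 <= t1 <= 1 ->
    (dpos D v).2 - dl < (dcurve D u v s1).2 < (dpos D v).2 ->
    (dcurve D u v s1).2 = (dcurve D u2 v t1).2 ->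
    0 < sg * ((dcurve D u2 v t1).1 - (dcurve D u v s1).1).

Section TwoPaths.
Variables (R : realType) (V : finType) (g : rel V) (D : drawing R V).
Hypothesis HD : upward_planar_drawing g D.
Local Notation pos := (dpos D).
Local Notation c := (dcurve D).
Local Notation Dr := (drawing_points g D).

Variables (u u2 v : V) (p1 p2 : seq V).
Hypotheses (dp1 : down_path g v (u :: p1)) (dp2 : down_path g v (u2 :: p2)).
Hypotheses (nu : u2 != u) (same_foot : last u2 p2 = last u p1).

Local Notation K1 := (path_points D v (u :: p1)).
Local Notation K2 := (path_points D v (u2 :: p2)).
Local Notation al := (pos (last u p1)).2.
Local Notation be := (pos v).2.
Local Notation A := (ygraph_x K1 al be).
Local Notation B := (ygraph_x K2 al be).

Lemma first_ygraph : ygraph K1 al be.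
Proof. exact: (path_ygraph HD dp1). Qed.

Lemma second_ygraph : ygraph K2 al be.
Proof. by rewrite -same_foot; exact: (path_ygraph HD dp2). Qed.

Lemma ygraph_point K y : ygraph K al be -> al <= y <= be -> K (ygraph_x K al be y, y).
Proof. by move=> HK hy; have := ygraph_x_in HK y; rewrite clamp_id. Qed.

Lemma foot_below_first : al <= (pos u).2.
Proof.
by case: dp1 => _ dp; have /andP [] := path_points_height HD dp (path_points_top HD dp).
Qed.

Lemma two_paths_apart y : (pos u).2 < y < be -> A y != B y.
Proof.
move=> /andP [uy yv]; apply/eqP => eAB.
have e : g u v by case: dp1.
have hy : al <= y <= be by rewrite (le_trans foot_below_first (ltW uy)) (ltW yv).
have [r r01 zr] := path_point_on_first_edge HD dp1 (ygraph_point first_ygraph hy) uy.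
case: (edge_point_cases HD e r01) => [hu|hv|r01'].
- by move: uy; rewrite -[y]/((A y, y).2) zr hu ltxx.
- by move: yv; rewrite -[y]/((A y, y).2) zr hv ltxx.
- apply: (path_avoids_edge_interior HD e dp2 nu r01').
  by rewrite -zr eAB; exact: ygraph_point second_ygraph hy.
Qed.

(* If the second edge enters v on the side sg of the first one, then the
   whole second path lies on that side of the first, at every height strictly
   between u and v: the two paths cannot cross there. *)
Lemma second_path_side (sg : R) : (sg = 1 \/ sg = -1) ->
  enters_on_side D u u2 v sg ->
  forall y0, (pos u).2 < y0 < be -> 0 < sg * (B y0 - A y0).
Proof.
move=> hsg [dl dl0 near_v] y0 /andP [u_y0 y0_v].
have e2 : g u2 v by case: dp2.
have [H1 H2] := (first_ygraph, second_ygraph).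
have al_u := foot_below_first.
pose G y := sg * (B y - A y).
have Gc : continuous G.
  move=> y; apply: (@continuousM _ _ (fun _ => sg) (fun y => B y - A y)).
    exact: cst_continuous.
  by apply: (@continuousB _ _ _ B A); exact: ygraph_x_continuous.
pose m := Num.max y0 (Num.max (be - dl) (pos u2).2).
have [m1 m2 m3] : [/\ y0 <= m, be - dl <= m & (pos u2).2 <= m].
  by rewrite !le_max !lexx !orbT.
have m_be : m < be by rewrite !gt_max y0_v (edge_upward HD e2) andbT; lra.
pose y1 := (be + m) / 2.
have [y0_y1 dl_y1 u2_y1 y1_v] : [/\ y0 <= y1, be - dl < y1, (pos u2).2 < y1 & y1 < be].
  by rewrite /y1; split; lra.
have G_y1 : 0 < G y1.
  have hy1 : al <= y1 <= be by apply/andP; split; lra.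
  have [s1 s101 zs1] :=
    path_point_on_first_edge HD dp1 (ygraph_point H1 hy1) (lt_le_trans u_y0 y0_y1).
  have [r2 r201 zr2] := path_point_on_first_edge HD dp2 (ygraph_point H2 hy1) u2_y1.
  rewrite /G -[A y1]/((A y1, y1).1) -[B y1]/((B y1, y1).1) zs1 zr2.
  apply: near_v => //; rewrite -zs1 //=; first by apply/andP.
  by rewrite -zr2.
apply: (positive_without_zero y0_y1 Gc _ G_y1) => y /andP [y0y yy1].
have sg0 : sg != 0 by case: hsg => ->; rewrite ?oppr_eq0 oner_eq0.
rewrite /G mulf_neq0 // subr_eq0 eq_sym; apply: two_paths_apart.
by apply/andP; split; lra.
Qed.

(* Then
   f meets, hence (being connected and disjoint from the drawing) lies in, the
   region enclosed by the two paths; so no point of the closure of f is higher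
   than v, and v is the only one at its height. *)
Lemma face_below_head (f : set (R * R)) p0 (sg t eps : R) :
  (sg = 1 \/ sg = -1) ->
  enters_on_side D u u2 v sg ->
  f = connected_component (~` Dr) p0 ->
  0 < t < 1 -> 0 < eps -> (forall d, 0 < d < eps -> f (offset sg d (c u v t))) ->
  forall z, closure f z -> z.2 <= be /\ (z.2 = be -> z = pos v).
Proof.
move=> hsg near_v hf t01 eps0 hq.
have e : g u v by case: dp1.
have [H1 H2] := (first_ygraph, second_ygraph).
have al_u := foot_below_first.
pose y0 := (c u v t).2.
have /andP [u_y0 y0_v] : (pos u).2 < y0 < be.
  rewrite /y0 -(edge_start HD e) -(edge_end HD e).
  by case/andP: t01 => t0 t1; rewrite !(edge_increasing HD e) ?lexx ?ler01 ?ltW.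
have A_y0 : A y0 = (c u v t).1.
  by apply: (ygraph_x_eq H1); left; exists t; rewrite //= in_itv /= !ltW //; case/andP: t01.
pose G := sg * (B y0 - A y0).
have G_pos : 0 < G by apply: second_path_side => //; rewrite u_y0 y0_v.
pose d := Num.min eps G / 2.
have [d_pos d_eps d_G] : [/\ 0 < d, d < eps & d < G].
  have mm0 : 0 < Num.min eps G by rewrite lt_min eps0 G_pos.
  have mm1 : Num.min eps G <= eps by rewrite ge_min lexx.
  have mm2 : Num.min eps G <= G by rewrite ge_min lexx orbT.
  by rewrite /d; split; lra.
have q_reg : region K1 K2 al be (offset sg d (c u v t)).
  split; first by split => /=; lra.
  rewrite /between /= -/y0 A_y0 (_ : _ * _ = d * (d - G)).
    by rewrite pmulr_rlt0 // subr_lt0.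
  by rewrite /G -A_y0; case: hsg => ->; ring.
have zb1 := path_points_bottom D dp1.
have zb2 := path_points_bottom D dp2; rewrite /= same_foot in zb2.
have [zt1 zt2] := (path_points_top HD dp1, path_points_top HD dp2).
have f_reg : f `<=` region K1 K2 al be.
  apply: (connected_in_region H1 H2 zb1 zb2 erefl zt1 zt2 erefl).
  - by rewrite hf; exact: component_connected.
  - move=> z; rewrite hf => /connected_component_sub fz Kz; apply: fz.
    by case: Kz; [exact: (path_points_drawing dp1) | exact: (path_points_drawing dp2)].
  - by exists (offset sg d (c u v t)); split => //; apply: hq; rewrite d_pos.
move=> z /(closureS f_reg) /(closure_region H1 H2).
exact: (closed_region_top H1 H2 zb1 zb2 erefl zt1 zt2 erefl).
Qed.

End TwoPaths.

Definition highest_point (R : realType) (S : set (R * R)) (p : R * R) : Prop :=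
  S p /\ forall z, S z -> z.2 <= p.2 /\ (z.2 = p.2 -> z = p).

Lemma highest_point_unique (R : realType) (S : set (R * R)) p q :
  highest_point S p -> highest_point S q -> p = q.
Proof.
move=> [Sp hp] [Sq hq]; have [pq _] := hq p Sp; have [qp eq] := hp q Sq.
by apply/esym/eq/le_anti; rewrite pq qp.
Qed.

Section BadEdges.
Variables (R : realType) (V : finType) (g : rel V) (D : drawing R V).
Hypothesis HD : upward_planar_drawing g D.
Local Notation pos := (dpos D).
Local Notation c := (dcurve D).
Local Notation Dr := (drawing_points g D).
Variable s : V.
Hypothesis only_source : forall x, indeg g x = 0%N -> x = s.

Lemma face_beside_incoming_edge (u v u2 : V) (f : set (R * R)) p0 (sg t eps : R) :
  g u v -> g u2 v -> u2 != u -> (sg = 1 \/ sg = -1) ->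
  enters_on_side D u u2 v sg ->
  f = connected_component (~` Dr) p0 ->
  0 < t < 1 -> 0 < eps -> (forall d, 0 < d < eps -> f (offset sg d (c u v t))) ->
  highest_point (closure f) (pos v).
Proof.
move=> e e2 nu hsg near_v hf t01 eps0 hq.
split; first exact: (head_in_face_closure HD e hf hsg t01 eps0 hq).
have [p1 dp1 l1] := down_path_to_source HD only_source u.
have [p2 dp2 l2] := down_path_to_source HD only_source u2.
have same_foot : last u2 p2 = last u p1 by rewrite l1 l2.
exact: (face_below_head HD (conj e dp1) (conj e2 dp2) nu same_foot hsg
          near_v hf t01 eps0 hq).
Qed.

(* The head of a bad edge is the unique highest point of the closure of the
   face: a left-incoming edge with the face on its right (or symmetrically)
   has the face between itself and the other incoming edge. *)
Lemma bad_edge_head_highest f p0 e : f = connected_component (~` Dr) p0 ->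
  bad_edge g D f e -> g e.1 e.2 /\ highest_point (closure f) (pos e.2).
Proof.
case: e => u v hf [/= euv [[_ [[_ [u2 [e2 nu [dl dl0 hin]]]] [t [ht [eps eps0 hq]]]]] |
                           [_ [[_ [u2 [e2 nu [dl dl0 hin]]]] [t [ht [eps eps0 hq]]]]]]].
- split => //; apply: (face_beside_incoming_edge euv e2 nu (or_introl erefl) _ hf ht eps0).
    exists dl => // s1 t1 hs1 ht1 hw he.
    by rewrite mul1r subr_gt0; apply: hin.
  by move=> d hd; rewrite /offset mul1r; exact: hq.
- split => //; apply: (face_beside_incoming_edge euv e2 nu (or_intror erefl) _ hf ht eps0).
    exists dl => // s1 t1 hs1 ht1 hw he.
    by rewrite mulN1r oppr_gt0 subr_lt0; apply: hin => //; rewrite -he.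
  by move=> d hd; rewrite /offset mulN1r; exact: hq.
Qed.

End BadEdges.

Theorem mainTheorem6 (R : realType) (V : finType) (g : rel V) :
  single_source g ->
  (forall v, (indeg g v <= 2)%N /\ (outdeg g v <= 2)%N) ->
  forall D : drawing R V, upward_planar_drawing g D ->
  forall f : set (R * R), is_face g D f ->
  forall e1 e2 e3 : V * V,
    bad_edge g D f e1 -> bad_edge g D f e2 -> bad_edge g D f e3 ->
    e1 = e2 \/ e1 = e3 \/ e2 = e3.
Proof.
move=> [s [_ s_unique]] deg D HD f [p0 [_ hf]] e1 e2 e3 b1 b2 b3.
have only_source x : indeg g x = 0%N -> x = s by move=> /s_unique.
have [g1 top1] := bad_edge_head_highest HD only_source hf b1.
have [g2 top2] := bad_edge_head_highest HD only_source hf b2.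
have [g3 top3] := bad_edge_head_highest HD only_source hf b3.
have v12 : e2.2 = e1.2 by apply: (pos_inj HD); exact: highest_point_unique top2 top1.
have v13 : e3.2 = e1.2 by apply: (pos_inj HD); exact: highest_point_unique top3 top1.
move: e1 e2 e3 v12 v13 g1 g2 g3 {b1 b2 b3 top1 top2 top3}.
move=> [u1 v] [u2 v2] [u3 v3] /= -> -> g1 g2 g3.
by case: (indeg2_in_neighbours (deg v).1 g1 g2 g3) => [->|[->|->]]; auto.
Qed.
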